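(* Let $X$ be a connected, locally connected normal space with at least two points. Then $X$ has a quotient space homeomorphic to the unit interval $[0,1]$; equivalently, there exists a continuous quotient surjection $f\colon X\to[0,1]$.
   Context: Here a normal space is a topological space in which singletons are closed and any two disjoint closed sets have disjoint open neighbourhoods. A surjection $f\colon X\to Y$ is a quotient map if for every $G\subseteq Y$, $G$ is open in $Y$ iff $f^{-1}(G)$ is open in $X$. ''$X$ has a quotient homeomorphic to $[0,1]$'' means there is an equivalence relation on $X$ whose quotient space is homeomorphic to $[0,1]$. *)

From HB Require Import structures.
From mathcomp Require Import all_boot all_order all_algebra.
From mathcomp Require Import all_classical all_reals all_analysis.
Set Implicit Arguments. Unset Strict Implicit. Unset Printing Implicit Defensive.
Import Order.TTheory GRing.Theory Num.Theory.
Import numFieldNormedType.Exports.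
Local Open Scope classical_set_scope.
Local Open Scope ring_scope.

Definition normal_T1_space (X : topologicalType) : Prop :=
  (forall x : X, closed [set x]) /\
  (forall A B : set X, closed A -> closed B -> A `&` B = set0 ->
     exists U V : set X, [/\ open U, open V, A `<=` U, B `<=` V & U `&` V = set0]).

Definition locally_connected (X : topologicalType) : Prop :=
  forall (x : X) (U : set X), nbhs x U ->
    exists V : set X, [/\ open V, V x, connected V & V `<=` U].

Definition open_in_unit_interval (R : realType) (G : set R) : Prop :=
  exists U : set R, open U /\ G = U `&` [set` `[(0:R), 1]].

Definition quotient_map_onto_unit_interval (R : realType) (X : topologicalType)
  (f : X -> R) : Prop :=
  f @` setT = [set` `[(0:R), 1]] /\
  (forall G : set R, G `<=` [set` `[(0:R), 1]] ->
     (open_in_unit_interval G <-> open (f @^-1` G))).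

(* Urysohn's lemma gives a continuous f : X -> [0,1] with f a = 0 and f b = 1;
   it is onto by connectedness.  It is a quotient map because X is locally
   connected: if f^-1(G) is open and t is in G with 0 < t, pick x on the level
   set f = t adherent to f < t (it exists since f >= t is closed and not open);
   a connected neighbourhood V of x inside f^-1(G) contains some y with
   f y < t, and f(V) is an interval, so [f y, t] lies in G.  The same
   argument for -f gives G a right neighbourhood of t. *)

From HB Require Import structures.
From mathcomp Require Import all_boot all_order all_algebra.
From mathcomp Require Import all_classical all_reals all_analysis.
From mathcomp Require Import lra.
Set Implicit Arguments. Unset Strict Implicit. Unset Printing Implicit Defensive.
Import Order.TTheory GRing.Theory Num.Theory.
Import numFieldNormedType.Exports.
Local Open Scope classical_set_scope.
Local Open Scope ring_scope.

Lemma connected_clopen_setT (X : topologicalType) (A : set X) :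
  connected [set: X] -> A !=set0 -> open A -> closed A -> A = [set: X].
Proof. by move=> cX A0 oA cA; apply: cX => //; exists A => //; rewrite setTI. Qed.

Lemma connected_ivt (R : realType) (X : topologicalType) (f : X -> R)
    (V : set X) (x y : X) (s : R) :
  continuous f -> connected V -> V x -> V y -> f x <= s <= f y ->
  exists2 z, V z & f z = s.
Proof.
move=> cf cV Vx Vy xsy.
have /connected_intervalP ifV := connected_continuous_connected cV
  (continuous_subspaceT cf).
by have [z Vz <-] := ifV _ _ (imageP f Vx) (imageP f Vy) s xsy; exists z.
Qed.

Lemma open_in_of_balls (R : realType) (A G : set R) :
  G `<=` A -> (forall t, G t -> exists2 e : R, 0 < e & ball t e `&` A `<=` G) ->
  exists U, open U /\ G = U `&` A.
Proof.
move=> GA Gball.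
pose U := [set s | exists t e, [/\ G t, 0 < e, ball t e `&` A `<=` G & ball t e s]].
exists U; split.
  rewrite openE => s [t [e [Gt e0 teG tes]]].
  apply: (@filterS _ _ _ (ball t e)); first by move=> r ter; exists t, e.
  exact: open_nbhs_nbhs (conj (ball_open t e) tes).
apply/seteqP; split => [t Gt|s [[t [e [_ _ teG tes]] As]]]; last exact: teG.
have [e e0 teG] := Gball t Gt.
by split; [exists t, e; split => //; exact: ballxx | exact: GA].
Qed.

Section LevelSets.
Variables (R : realType) (X : topologicalType) (f : X -> R).
Hypotheses (cf : continuous f) (cX : connected [set: X]).

Lemma level_point_not_interior (t : R) :
  (exists a, f a < t) -> (exists b, t <= f b) ->
  exists x, f x = t /\ ~ nbhs x [set z | t <= f z].
Proof.
move=> [a fat] [b tfb]; pose A := [set z | t <= f z].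
have cA : closed A.
  apply: (@preimage_closed _ _ f [set r | t <= r]) => [z _|].
    exact: cf.
  exact: closed_ge.
have nA : ~ open A.
  move=> oA; have := connected_clopen_setT cX (ex_intro _ b tfb) oA cA.
  by move/seteqP => [_ /(_ a I)]; rewrite /A /= leNgt fat.
have [x [Ax nix]] : exists x, A x /\ ~ nbhs x A.
  apply: contrapT => H; apply: nA; rewrite openE => z Az.
  by apply: contrapT => nz; apply: H; exists z.
exists x; split => //; apply/eqP; rewrite eq_le Ax andbT leNgt.
apply/negP => tfx; apply: nix; apply: (@filterS _ _ _ (f @^-1` [set r | t < r])).
  by move=> z /ltW.
apply: open_nbhs_nbhs; split => //.
by apply: open_comp => [z _|]; [exact: cf | exact: open_gt].
Qed.

Hypothesis lcX : locally_connected X.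

Lemma open_preimage_left_itv (G : set R) (t : R) :
  open (f @^-1` G) -> G t -> (exists a, f a < t) -> (exists b, t <= f b) ->
  exists2 e : R, 0 < e & forall u, t - e < u <= t -> G u.
Proof.
move=> oG Gt lt_t ge_t.
have [x [fxt nix]] := level_point_not_interior lt_t ge_t.
have Gx : nbhs x (f @^-1` G) by apply: open_nbhs_nbhs; split; rewrite //= fxt.
have [V [oV Vx cV VG]] := lcX Gx.
have [y Vy fyt] : exists2 y, V y & f y < t.
  apply: contrapT => nVy; apply: nix.
  apply: (@filterS _ _ _ V); last exact: open_nbhs_nbhs.
  by move=> z Vz; rewrite /= leNgt; apply/negP => fzt; apply: nVy; exists z.
exists (t - f y) => [|u /andP[yu ut]]; first by rewrite subr_gt0.
have [|z Vz <-] := connected_ivt cf cV Vy Vx (s := u); last exact: VG.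
by rewrite fxt ut andbT; apply: ltW; lra.
Qed.

End LevelSets.

Lemma open_preimage_right_itv (R : realType) (X : topologicalType) (f : X -> R)
    (G : set R) (t : R) :
  continuous f -> connected [set: X] -> locally_connected X ->
  open (f @^-1` G) -> G t -> (exists a, t < f a) -> (exists b, f b <= t) ->
  exists2 e : R, 0 < e & forall u, t <= u < t + e -> G u.
Proof.
move=> cf cX lcX oG Gt [a tfa] [b fbt].
have cNf : continuous (fun x => - f x) by move=> x; apply: cvgN; exact: cf.
have oNG : open ((fun x => - f x) @^-1` [set r | G (- r)]).
  by rewrite (_ : _ @^-1` _ = f @^-1` G) //; apply/funext => z /=; rewrite opprK.
have [|||e e0 eG] := open_preimage_left_itv cNf cX lcX oNG (t := - t).
- by rewrite /= opprK.
- by exists a; rewrite ltrN2.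
- by exists b; rewrite lerN2.
exists e => // u /andP[tu ut]; rewrite -[u]opprK; apply: eG.
apply/andP; split; lra.
Qed.

Section UnitIntervalQuotient.
Variables (R : realType) (X : topologicalType) (f : X -> R) (a b : X).
Hypotheses (cf : continuous f) (cX : connected [set: X]) (lcX : locally_connected X).
Hypotheses (fa0 : f a = 0) (fb1 : f b = 1) (f01 : forall z, 0 <= f z <= 1).

Lemma image_unit_interval : f @` setT = [set` `[(0 : R), 1]].
Proof.
apply/seteqP; split=> [_ [z _ <-]|t]; rewrite /= in_itv /=; first exact: f01.
move=> t01; have [|z _ <-] := connected_ivt cf cX (I : setT a) (I : setT b) (s := t).
  by rewrite fa0 fb1.
by exists z.
Qed.

Variable G : set R.
Hypothesis oG : open (f @^-1` G).

Lemma open_preimage_left_itv01 (t : R) : G t -> 0 <= t <= 1 ->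
  exists2 e : R, 0 < e & forall u, 0 <= u -> t - e < u <= t -> G u.
Proof.
move=> Gt /andP[t0 t1]; have [t00|t0'] := eqVneq t 0.
  by exists 1 => // u u0 /andP[_ ut]; have -> : u = t by lra.
have [||e e0 eG] := open_preimage_left_itv cf cX lcX oG Gt.
- by exists a; rewrite fa0 lt_neqAle eq_sym t0' t0.
- by exists b; rewrite fb1.
by exists e => // u _; exact: eG.
Qed.

Lemma open_preimage_right_itv01 (t : R) : G t -> 0 <= t <= 1 ->
  exists2 e : R, 0 < e & forall u, u <= 1 -> t <= u < t + e -> G u.
Proof.
move=> Gt /andP[t0 t1]; have [t11|t1'] := eqVneq t 1.
  by exists 1 => // u u1 /andP[tu _]; have -> : u = t by lra.
have [||e e0 eG] := open_preimage_right_itv cf cX lcX oG Gt.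
- by exists b; rewrite fb1 lt_neqAle t1' t1.
- by exists a; rewrite fa0.
by exists e => // u _; exact: eG.
Qed.

Lemma open_in_unit_interval_of_preimage :
  G `<=` [set` `[(0 : R), 1]] -> open_in_unit_interval G.
Proof.
move=> G01; apply: open_in_of_balls => // t Gt.
have t01 : 0 <= t <= 1 by have := G01 t Gt; rewrite /= in_itv.
have [e1 e10 le1] := open_preimage_left_itv01 Gt t01.
have [e2 e20 ge2] := open_preimage_right_itv01 Gt t01.
exists (Num.min e1 e2) => [|u []]; first by rewrite lt_min e10 e20.
rewrite ball_itv /= !in_itv /= => /andP[tu ut] /andP[u0 u1].
have e1e : Num.min e1 e2 <= e1 by rewrite ge_min lexx.
have e2e : Num.min e1 e2 <= e2 by rewrite ge_min lexx orbT.
have [uLt|tLu] := leP u t.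
  by apply: le1 => //; apply/andP; split => //; lra.
by apply: ge2 => //; apply/andP; split; lra.
Qed.

End UnitIntervalQuotient.

Lemma quotient_map_onto_unit_interval_of_connected (R : realType)
    (X : topologicalType) (f : X -> R) (a b : X) :
  continuous f -> connected [set: X] -> locally_connected X ->
  f a = 0 -> f b = 1 -> (forall z, 0 <= f z <= 1) ->
  quotient_map_onto_unit_interval f.
Proof.
move=> cf cX lcX fa0 fb1 f01; split; first exact: (image_unit_interval cf cX fa0 fb1 f01).
move=> G G01; split => [[U [oU ->]]|oG].
  have -> : f @^-1` (U `&` [set` `[0, 1]]) = f @^-1` U.
    by apply/seteqP; split=> z /= => [[]|Uz] //; rewrite in_itv /= f01.
  by apply: open_comp => // z _; exact: cf.
exact: (open_in_unit_interval_of_preimage cf cX lcX fa0 fb1 oG).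
Qed.

Theorem mainTheorem3 (R : realType) (X : topologicalType) :
  connected [set: X] ->
  locally_connected X ->
  normal_T1_space X ->
  (exists x y : X, x <> y) ->
  exists f : X -> R, quotient_map_onto_unit_interval f.
Proof.
move=> cX lcX [T1 sep] [a [b ab]].
have ab0 : [set a] `&` [set b] = set0 by apply/seteqP; split=> z // [/= -> /ab].
have [f [cf fa fb f01]] :=
  urysohn_ext_itv ((@normal_openP R X).2 sep) (T1 a) (T1 b) ab0 (@ltr01 R).
exists f; apply: (quotient_map_onto_unit_interval_of_connected (a := a) (b := b)) => //.
- by apply: fa; exists a.
- by apply: fb; exists b.
- by move=> z; have := f01 _ (imageP f (I : setT z)); rewrite /= in_itv.
Qed.
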